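(* Let $\mathfrak h\in\mathrm{Mult}_\rho$ and let $\mathfrak n\in\mathrm{Mult}_\rho$ be admissible to $\mathfrak h$, $\mathfrak n\ne\emptyset$. Let $a$ be the smallest integer with $\mathfrak n[a]\ne\emptyset$ and let $\Delta\in\mathfrak n[a]$. If there exists a segment $\overline\Delta\in\mathfrak n[a+1]$ with $\overline\Delta\not\subset\Delta$ and $\overline\Delta\subset\Upsilon(\Delta,\mathfrak h)$, then $(\mathfrak n,\mathfrak h)$ is locally minimizable.
   Context: Segments: for integers $a\le b$, $[a,b]_\rho$ (think of the integer interval $\{a,\dots,b\}$), with $a(\Delta)=a$, $b(\Delta)=b$, and inclusion of segments as intervals. Two segments are linked if their union is a segment (an interval) and neither contains the other. A multisegment is a finite multiset of nonempty segments; $\mathrm{Mult}_\rho$ is the set of multisegments (including $\emptyset$); $+$ and $-$ denote multiset sum and difference. For $c\in\mathbb Z$, $\mathfrak m[c]$ is the submultisegment of segments $\Delta\in\mathfrak m$ with $a(\Delta)=c$. A sequence of segments $\Delta_1,\dots,\Delta_k$ is ascending if for $i<j$ either $\Delta_i,\Delta_j$ are unlinked or $a(\Delta_i)<a(\Delta_j)$. Write $[x,y]_\rho\prec^L[x',y']_\rho$ if $x<x'$, or $x=x'$ and $y<y'$. A segment $\Delta=[a,b]_\rho$ is admissible to $\mathfrak h$ if $\mathfrak h$ contains a segment $[a,c]_\rho$ with $c\ge b$. Removal process: for $\Delta=[a,b]_\rho$ admissible to $\mathfrak h$, let $\Delta_1=[a_1,b_1]_\rho$ be a shortest segment of $\mathfrak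 h$ with $a_1=a$ and $b_1\ge b$; recursively, let $\Delta_i=[a_i,b_i]_\rho$ be the $\prec^L$-minimal segment of $\mathfrak h$ with $a_{i-1}<a_i$ and $b\le b_i<b_{i-1}$, stopping when none exists; let $\Delta_1,\dots,\Delta_r$ be the segments obtained. Put $\Delta_i^{tr}=[a_{i+1},b_i]_\rho$ for $i<r$ and $\Delta_r^{tr}=[b+1,b_r]_\rho$ (possibly empty), and $\mathfrak r(\Delta,\mathfrak h)=\mathfrak h-\sum_i\Delta_i+\sum_i\Delta_i^{tr}$; also $\Upsilon(\Delta,\mathfrak h)=\Delta_1$. If $\Delta$ is not admissible, $\mathfrak r(\Delta,\mathfrak h)=\infty$, and $\mathfrak r(\Delta,\infty)=\infty$. For $\mathfrak m$ with segments in ascending order $\Delta_1,\dots,\Delta_k$, $\mathfrak r(\mathfrak m,\mathfrak h)=\mathfrak r(\Delta_k,\dots\mathfrak r(\Delta_1,\mathfrak h)\dots)$, and $\mathfrak m$ is admissible to $\mathfrak h$ if $\mathfrak r(\mathfrak m,\mathfrak h)\ne\infty$. For $\mathfrak n\ne\emptyset$ with $a$ minimal such that $\mathfrak n[a]\ne\emptyset$, enumerate $\mathfrak n[a]=\{\Delta_1,\dots,\Delta_k\}$; if $\mathfrak n[a]$ is admissible to $\mathfrak h$, put $\mathfrak r_0=\mathfrak h$, $\mathfrak r_i=\mathfrak r(\{\Delta_i,\dots,\Delta_1\},\mathfrak h)$ and $\mathfrak{fs}(\mathfrak n,\mathfrak h)=\{\Upsilon(\Delta_1,\mathfrak r_0),\dots,\Upsilon(\Delta_k,\mathfrak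 r_{k-1})\}$ (independent of the enumeration); otherwise $\mathfrak{fs}(\mathfrak n,\mathfrak h)=\emptyset$. Local minimizability: for $\mathfrak n$ admissible to $\mathfrak h$, with $a$ minimal such that $\mathfrak n[a]\ne\emptyset$, the pair $(\mathfrak n,\mathfrak h)$ is locally minimizable if there exists $\overline\Delta\in\mathfrak n[a+1]$ with $|\{\Delta\in\mathfrak n[a]:\overline\Delta\subset\Delta\}|<|\{\Delta\in\mathfrak{fs}(\mathfrak n,\mathfrak h):\overline\Delta\subset\Delta\}|$ (cardinalities counted with multiplicity). *)

(* Segments [a,b]_rho are encoded as pairs (a,b) of integers;
   multisegments as finite sequences of segments (multisets up to permutation). *)
From mathcomp Require Import all_boot all_order all_algebra.
Import Order.TTheory GRing.Theory Num.Theory.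
Local Open Scope ring_scope.

Definition seg := (int * int)%type.
Definition sa (D : seg) : int := D.1.
Definition sb (D : seg) : int := D.2.
Definition seg_valid (D : seg) : bool := sa D <= sb D.
Definition mult := seq seg.

Definition subseg (D E : seg) : bool := (sa E <= sa D) && (sb D <= sb E).

Definition ltL (D E : seg) : bool :=
  (sa D < sa E) || ((sa D == sa E) && (sb D < sb E)).
Definition leL (D E : seg) : bool :=
  (sa D < sa E) || ((sa D == sa E) && (sb D <= sb E)).

Definition minby (le : rel seg) (s : seq seg) : option seg :=
  foldr (fun x acc => match acc with
                      | None => Some x
                      | Some y => if le x y then Some x else Some y end) None s.

Definition msub (m : mult) (c : int) : mult := [seq D <- m | sa D == c].

(* Upsilon(D,h): a shortest segment of h with start a(D) and end >= b(D);
   None iff D is not admissible to h *)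
Definition Upsilon (D : seg) (h : mult) : option seg :=
  minby (fun x y => sb x <= sb y) [seq E <- h | (sa E == sa D) && (sb D <= sb E)].

(* the recursive part of the removal process: from Delta_{i-1} = prev,
   take the ≺^L-minimal segment E of h with a_{i-1} < a(E), b <= b(E) < b_{i-1} *)
Fixpoint rchain (fuel : nat) (h : mult) (b : int) (prev : seg) : seq seg :=
  match fuel with
  | 0%N => [::]
  | S f =>
    match minby leL [seq E <- h | [&& sa prev < sa E, b <= sb E & sb E < sb prev]] with
    | None => [::]
    | Some E => E :: rchain f h b E
    end
  end.

(* truncations Delta_i^tr = [a_{i+1}, b_i] (i<r), Delta_r^tr = [b+1, b_r] (dropped if empty) *)
Fixpoint truncs (b : int) (l : seq seg) : seq seg :=
  match l with
  | [::] => [::]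
  | [:: D] => if b < sb D then [:: (b + 1, sb D)] else [::]
  | D :: ((E :: _) as t) => (sa E, sb D) :: truncs b t
  end.

(* r(D,h); None encodes infinity *)
Definition remove1 (D : seg) (h : mult) : option mult :=
  match Upsilon D h with
  | None => None
  | Some D1 =>
    let l := D1 :: rchain (size h) h (sb D) D1 in
    Some (foldl (fun acc E => rem E acc) h l ++ truncs (sb D) l)
  end.

(* r(m,h), computed along the ascending order obtained by sorting m by ≺^L
   (sorting by starting point gives an ascending sequence). *)
Definition rmult (m h : mult) : option mult :=
  foldl (fun acc D => obind (remove1 D) acc) (Some h) (sort leL m).

Definition admissible (m h : mult) : bool := rmult m h != None.

Fixpoint fs_aux (l : seq seg) (r : mult) : seq seg :=
  match l with
  | [::] => [::]
  | D :: l' =>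
    match Upsilon D r, remove1 D r with
    | Some U, Some r' => U :: fs_aux l' r'
    | _, _ => [::]
    end
  end.

Definition fs_at (a : int) (n h : mult) : seq seg :=
  if admissible (msub n a) h then fs_aux (msub n a) h else [::].

Definition is_min_start (a : int) (n : mult) : Prop :=
  msub n a != [::] /\ (forall E, E \in n -> a <= sa E).

Definition locally_minimizable (n h : mult) : Prop :=
  admissible n h /\
  exists a : int, is_min_start a n /\
    exists Dbar, Dbar \in msub n (a + 1) /\
      (count (subseg Dbar) (msub n a) < count (subseg Dbar) (fs_at a n h))%N.

From mathcomp Require Import all_boot all_order all_algebra.
From mathcomp Require Import zify.
Import Order.TTheory GRing.Theory Num.Theory.
Local Open Scope ring_scope.

(* Removing a segment that starts at or above [a] changes the level [a] of the
   multisegment only by deleting its [Upsilon]: the chain and the truncations all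
   start strictly above [a].  Hence admissibility of the bottom level [n[a]] is a
   Hall-type counting condition: for every [t], [n[a]] has at most as many
   segments ending at or after [t] as [h[a]].  Under this condition the choices of
   [fs] are made greedily inside [h[a]].  Since [Upsilon(D,h)] is a shortest
   candidate for [D] and contains [Dbar], every candidate ending at or after [b(D)]
   contains [Dbar]; so each segment of [n[a]] containing [Dbar] and also [D]
   itself receive a choice containing [Dbar], giving the strict inequality. *)

Lemma filter_all_predC {T : eqType} [p : pred T] [s : seq T] :
  all (predC p) s -> filter p s = [::].
Proof. by elim: s => //= x s IH /andP[/negbTE -> /IH]. Qed.

Lemma filter_rem_predC {T : eqType} (p : pred T) (x : T) (s : seq T) :
  ~~ p x -> filter p (rem x s) = filter p s.
Proof.
move=> px; elim: s => //= y s IH.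
by case: eqVneq => [->|_] /=; [rewrite (negbTE px) | rewrite IH].
Qed.

Lemma filter_rem_pred {T : eqType} (p : pred T) (x : T) (s : seq T) :
  p x -> filter p (rem x s) = rem x (filter p s).
Proof.
move=> px; elim: s => //= y s IH.
case: eqVneq => [->|ne] /=; first by rewrite px /= eqxx.
by case: ifP => //= _; rewrite (negbTE ne) IH.
Qed.

Lemma filter_foldl_rem_predC {T : eqType} [p : pred T] [l : seq T] (s : seq T) :
  all (predC p) l ->
  filter p (foldl (fun acc x => rem x acc) s l) = filter p s.
Proof.
elim: l s => //= x l IH s /andP[px pl].
by rewrite IH // filter_rem_predC.
Qed.

Lemma mem_minby [le : rel seg] [s : seq seg] [y : seg] : minby le s = Some y -> y \in s.
Proof.
elim: s y => [|x s IH] y //=; rewrite /minby /= -/(minby le s).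
case: (minby le s) IH => [z|] IH; last by move=> [<-]; rewrite mem_head.
by case: ifP => _ [<-]; rewrite ?mem_head // in_cons IH ?orbT.
Qed.

Lemma minby_None [le : rel seg] [s : seq seg] : minby le s = None -> s = [::].
Proof. by case: s => //= x s; rewrite /minby /=; case: foldr => [?|] //; case: ifP. Qed.

Lemma minby_sb_le [s : seq seg] [y : seg] :
  minby (fun x y => sb x <= sb y) s = Some y ->
  forall z, z \in s -> sb y <= sb z.
Proof.
elim: s y => [|x s IH] y //=; rewrite /minby /= -/(minby _ s).
case E: (minby _ s) => [w|]; last first.
  by move=> [<-] z; rewrite (minby_None E) in_cons orbF => /eqP->.
case: ifP => Hx [<-] z; rewrite in_cons => /orP[/eqP->|zs] //.
- exact: le_trans Hx (IH _ E z zs).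
- by rewrite ltW // ltNge Hx.
- exact: IH.
Qed.

Lemma UpsilonP [D : seg] [r : mult] [U : seg] : Upsilon D r = Some U ->
  [/\ U \in r, sa U = sa D, sb D <= sb U &
   forall E, E \in r -> sa E = sa D -> sb D <= sb E -> sb U <= sb E].
Proof.
rewrite /Upsilon => M.
have := mem_minby M; rewrite mem_filter => /andP[/andP[/eqP UD DU] Ur].
split=> // E Er Ea Eb; apply: (minby_sb_le M).
by rewrite mem_filter Er Ea eqxx Eb.
Qed.

Lemma Upsilon_Some [D : seg] [r : mult] [E : seg] :
  E \in r -> sa E = sa D -> sb D <= sb E ->
  exists U, Upsilon D r = Some U.
Proof.
move=> Er Ea Eb; rewrite /Upsilon.
have : E \in [seq E <- r | (sa E == sa D) && (sb D <= sb E)].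
  by rewrite mem_filter Er Ea eqxx Eb.
case: [seq _ <- _ | _] => // y s _; rewrite /minby /=.
by case: foldr => [w|]; [case: ifP => _; eexists | eexists].
Qed.

Lemma rchain_sa_gt f h b prev : all (fun E => sa prev < sa E) (rchain f h b prev).
Proof.
elim: f prev => [|f IH] prev //=.
case M: minby => [E|] //=.
have := mem_minby M; rewrite mem_filter => /andP[/and3P[prevE _ _] _].
rewrite prevE; apply/allP => z /(allP (IH E)); exact: lt_trans.
Qed.

Lemma truncs_sa_gt a b l : all (fun E => a < sa E) (behead l) -> a <= b ->
  all (fun E => a < sa E) (truncs b l).
Proof.
elim: l => [|D [|E t] IH] //= Ht ab.
  by case: ifP => //= _; rewrite andbT /sa /=; lia.
by case/andP: Ht => HE Ht; rewrite /sa /= HE /=; apply: IH.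
Qed.

Lemma msub_rem U r a :
  msub (rem U r) a = if sa U == a then rem U (msub r a) else msub r a.
Proof.
by case: ifP => Ua; [apply: filter_rem_pred | apply: filter_rem_predC; rewrite /= Ua].
Qed.

Lemma msub_remove1 [a : int] [D : seg] [r r' : mult] :
  seg_valid D -> a <= sa D -> remove1 D r = Some r' ->
  exists U, Upsilon D r = Some U /\ msub r' a = msub (rem U r) a.
Proof.
move=> vD aD; rewrite /remove1; case HU: Upsilon => [U|] // [<-].
exists U; split=> //; have [_ UD _ _] := UpsilonP HU.
set ch := rchain _ _ _ _; rewrite -[X in _ ++ X]/(truncs (sb D) (U :: ch)).
have above : all (fun E => a < sa E) ch.
  apply/allP => z /(allP (rchain_sa_gt _ _ _ _)); rewrite UD; exact: le_lt_trans.
have not_a s : all (fun E => a < sa E) s -> all (predC (fun E => sa E == a)) s.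
  by move=> /allP sa_gt; apply/allP => E /sa_gt /= aE; rewrite gt_eqF.
have truncs_above : all (fun E => a < sa E) (truncs (sb D) (U :: ch)).
  by apply: truncs_sa_gt => //; exact: le_trans aD vD.
rewrite /msub filter_cat (filter_foldl_rem_predC _ (not_a _ above)).
by rewrite (filter_all_predC (not_a _ truncs_above)) cats0.
Qed.

Definition count_end_ge (t : int) (s : seq seg) : nat :=
  count (fun E => t <= sb E) s.

Definition ends_dominated (l r : seq seg) : Prop :=
  forall t, (count_end_ge t l <= count_end_ge t r)%N.

Lemma count_end_ge_rem (t : int) [U : seg] [r : seq seg] : U \in r ->
  count_end_ge t r = ((t <= sb U)%R + count_end_ge t (rem U r))%N.
Proof. by move=> Ur; rewrite /count_end_ge (permP (perm_to_rem Ur)). Qed.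

Lemma ends_dominated_perml [l l' r : seq seg] : perm_eq l l' ->
  ends_dominated l r -> ends_dominated l' r.
Proof. by move=> ll' dom t; rewrite /count_end_ge -(permP ll'); apply: dom. Qed.

Lemma foldl_remove1_None l :
  foldl (fun acc D => obind (remove1 D) acc) None l = None.
Proof. by elim: l. Qed.

Lemma foldl_remove1_ends_dominated (a : int) [l r : seq seg] :
  all (fun E => (a <= sa E) && seg_valid E) l ->
  foldl (fun acc D => obind (remove1 D) acc) (Some r) l != None ->
  ends_dominated (msub l a) (msub r a).
Proof.
elim: l r => [|D l IH] r /=; first by move=> _ _ t.
move=> /andP[/andP[aD vD] Hl]; case R: (remove1 D r) => [r'|]; last first.
  by rewrite foldl_remove1_None.
move=> /(IH _ Hl); have [U [HU ->]] := msub_remove1 vD aD R.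
have [Ur UD DU _] := UpsilonP HU.
rewrite msub_rem UD {2}/msub /= -/(msub l a).
case: eqP => [Da dom t|_ //].
have Ua : U \in msub r a by rewrite mem_filter UD Da eqxx.
rewrite (count_end_ge_rem t Ua) /count_end_ge /=.
move: (dom t); rewrite /count_end_ge -/(msub r a).
case tD: (t <= sb D) => /=; last lia.
by rewrite (le_trans tD DU) /=; lia.
Qed.

Lemma remove1_ends_dominated [a : int] [D : seg] [l r : seq seg] :
  sa D = a -> seg_valid D ->
  ends_dominated (D :: l) (msub r a) ->
  exists U r', [/\ Upsilon D r = Some U, remove1 D r = Some r',
    msub r' a = rem U (msub r a), ends_dominated l (msub r' a) &
    [/\ U \in r, sa U = a & sb D <= sb U]].
Proof.
move=> Da vD dom.
have : (0 < count_end_ge (sb D) (msub r a))%N.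
  by have := dom (sb D); rewrite /count_end_ge /= lexx; lia.
rewrite -has_count => /hasP[E]; rewrite mem_filter => /andP[/eqP Ea Er] DE.
have [U HU] := Upsilon_Some Er (etrans Ea (esym Da)) DE.
have [r' R] : exists r', remove1 D r = Some r' by rewrite /remove1 HU; eexists.
have aD : a <= sa D by rewrite Da.
have [U' [HU' Hr']] := msub_remove1 vD aD R.
rewrite HU in HU'; case: HU' Hr' => <- Hr'.
have [Ur UD DU Umin] := UpsilonP HU.
have Ua : U \in msub r a by rewrite mem_filter UD Da eqxx Ur.
have r'a : msub r' a = rem U (msub r a) by rewrite Hr' msub_rem UD Da eqxx.
exists U, r'; split => //; last by rewrite UD Da.
rewrite r'a => t; have := dom t.
rewrite /count_end_ge /= -!/(count_end_ge _ _) (count_end_ge_rem t Ua).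
case tD: (t <= sb D); first by rewrite (le_trans tD DU) /=; lia.
case tU: (t <= sb U) => /=; last lia.
have Dt : sb D <= t by rewrite ltW // ltNge tD.
(* between [b(D)] and [b(U)] no segment of [h[a]] ends, by minimality of [U] *)
have same : count_end_ge t (msub r a) = count_end_ge (sb D) (msub r a).
  apply: eq_in_count => F; rewrite mem_filter => /andP[/eqP Fa Fr].
  apply/idP/idP => [|DF]; first exact: le_trans Dt.
  by apply: le_trans tU (Umin F Fr _ DF); rewrite Fa Da.
have fewer : (count_end_ge t l <= count_end_ge (sb D) l)%N.
  by apply: sub_count => F /= tF; exact: le_trans Dt tF.
have := dom (sb D).
rewrite /count_end_ge /= lexx -!/(count_end_ge _ _) -same.
by rewrite (count_end_ge_rem t Ua) tU /=; lia.
Qed.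

Lemma ends_dominated_foldl_remove1 (a : int) [l r : seq seg] :
  all (fun E => (sa E == a) && seg_valid E) l -> ends_dominated l (msub r a) ->
  foldl (fun acc D => obind (remove1 D) acc) (Some r) l != None.
Proof.
elim: l r => [|D l IH] r //= /andP[/andP[/eqP Da vD] Hl] dom.
have [U [r' [_ -> _ dom' _]]] := remove1_ends_dominated Da vD dom.
exact: IH.
Qed.

Lemma count_subseg_fs_aux [a : int] [Dbar D : seg] [l r : seq seg] :
  sa Dbar = a + 1 -> sa D = a -> sb D < sb Dbar ->
  all (fun E => (sa E == a) && seg_valid E) l -> ends_dominated l (msub r a) ->
  (forall E, E \in r -> sa E = a -> sb D <= sb E -> sb Dbar <= sb E) ->
  (count (subseg Dbar) l + (D \in l) <= count (subseg Dbar) (fs_aux l r))%N.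
Proof.
move=> Dbara Da DDbar; elim: l r => [|E l IH] r //=.
move=> /andP[/andP[/eqP Ea vE] Hl] dom long.
have [U [r' [HU R r'a dom' [Ur Ua EU]]]] := remove1_ends_dominated Ea vE dom.
rewrite HU R /=.
have long' : forall F, F \in r' -> sa F = a -> sb D <= sb F -> sb Dbar <= sb F.
  move=> F Fr' Fa; apply: long => //.
  have : F \in msub r' a by rewrite mem_filter Fa eqxx.
  by rewrite r'a => /mem_rem; rewrite mem_filter => /andP[].
have := IH r' Hl dom' long'.
have subseg_a F : sa F = a -> subseg Dbar F = (sb Dbar <= sb F).
  by move=> Fa; rewrite /subseg Dbara Fa lerDl.
rewrite in_cons (subseg_a _ Ea) (subseg_a _ Ua).
case: (eqVneq D E) => [DE|_] /=.
  have DU : sb D <= sb U by rewrite DE.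
  by rewrite (long U Ur Ua DU) -DE leNgt DDbar /=; case: (D \in l); lia.
case: (D \in l); case EDbar: (sb Dbar <= sb E);
  rewrite ?(le_trans EDbar EU) /=; try lia; case: (sb Dbar <= sb U) => /=; lia.
Qed.

Lemma admissible_ends_dominated [a : int] [n h : mult] : all seg_valid n ->
  (forall E, E \in n -> a <= sa E) -> admissible n h ->
  ends_dominated (msub n a) (msub h a).
Proof.
move=> vn a_le adm.
have sort_above : all (fun E => (a <= sa E) && seg_valid E) (sort leL n).
  by apply/allP => E; rewrite mem_sort => En; rewrite a_le //=; exact: (allP vn).
apply: ends_dominated_perml (foldl_remove1_ends_dominated a sort_above adm).
by apply: perm_filter; rewrite perm_sort.
Qed.

Lemma ends_dominated_admissible [a : int] [l h : seq seg] :
  all (fun E => (sa E == a) && seg_valid E) l -> ends_dominated l (msub h a) ->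
  admissible l h.
Proof.
move=> la dom; apply: (ends_dominated_foldl_remove1 a).
  by apply/allP => E; rewrite mem_sort; exact: (allP la).
by apply: ends_dominated_perml dom; rewrite perm_sym perm_sort.
Qed.

Theorem mainTheorem9 (h n : mult) (a : int) (D : seg) :
  all seg_valid h -> all seg_valid n ->
  admissible n h -> n != [::] ->
  is_min_start a n ->
  D \in msub n a ->
  (exists Dbar U, [/\ Dbar \in msub n (a + 1), ~~ subseg Dbar D,
                     Upsilon D h = Some U & subseg Dbar U]) ->
  locally_minimizable n h.
Proof.
move=> _ vn adm _ [na a_le] Dna [Dbar [U [Dbarn DbarD HU DbarU]]].
split=> //; exists a; split=> //; exists Dbar; split=> //.
move: Dbarn (Dna); rewrite !mem_filter => /andP[/eqP Dbara _] /andP[/eqP Da _].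
have DDbar : sb D < sb Dbar.
  by move: DbarD; rewrite /subseg Da Dbara lerDl /= ltNge.
have long E : E \in h -> sa E = a -> sb D <= sb E -> sb Dbar <= sb E.
  have [_ _ _ Umin] := UpsilonP HU; case/andP: DbarU => _ DbarU Eh Ea DE.
  by apply: le_trans DbarU (Umin E Eh _ DE); rewrite Ea Da.
have level_a : all (fun E => (sa E == a) && seg_valid E) (msub n a).
  by apply/allP => E; rewrite mem_filter => /andP[-> En]; exact: (allP vn).
have dom := admissible_ends_dominated vn a_le adm.
rewrite /fs_at (ends_dominated_admissible level_a dom).
by have := count_subseg_fs_aux Dbara Da DDbar level_a dom long; rewrite Dna; lia.
Qed.
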